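(* Let $A$ be a finite-dimensional associative algebra over $K=\mathbb{R}$ or $\mathbb{C}$, let $\mathfrak g$ be a Lie subalgebra of $A_L$, and let $r\in\mathfrak g\wedge\mathfrak g$ satisfy the classical Yang–Baxter equation $[r^{12},r^{13}]+[r^{12},r^{23}]+[r^{13},r^{23}]=0$. Then $\delta(X)=rX-Xr$, $X\in\mathrm{Symm}(A\otimes A)$, defines (via its dual) a quadratic Poisson bracket on $A$ compatible with the multiplication of $A$.
   Context: $A_L$ is the Lie algebra on $A$ with bracket $[a,b]=ab-ba$. $A\otimes A$ is an algebra with componentwise multiplication; $\mathrm{Symm}(A\otimes A)$ are the symmetric tensors. For $r=\sum_i\alpha_i\otimes\beta_i$, $r^{12}=\sum_i\alpha_i\otimes\beta_i\otimes1$, $r^{13}=\sum_i\alpha_i\otimes1\otimes\beta_i$, $r^{23}=\sum_i1\otimes\alpha_i\otimes\beta_i$ with $1$ a formal unit; the commutators only involve Lie brackets in $\mathfrak g$ (e.g. $[a\otimes b\otimes1,c\otimes1\otimes d]=[a,c]\otimes b\otimes d$). The bracket defined by $\delta$ is the one whose values on linear functions are given by the dual map $\delta^*\colon A^*\wedge A^*\to\mathrm{Sym}^2(A^* )$ (identifying $\mathrm{Symm}(A\otimes A)$ with $(\mathrm{Sym}^2A^* )^*$ and $A\wedge A$ with $(A^*\wedge A^* )^*$), extended by the Leibniz rule. Compatibility means the multiplication map $A\times A\to A$ is a Poisson map when $A\times A$ carries the product Poisson structure. *)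

From HB Require Import structures.
From mathcomp Require Import all_boot all_order all_algebra.
From mathcomp Require Import mpoly.
Set Implicit Arguments. Unset Strict Implicit. Unset Printing Implicit Defensive.
Import Order.TTheory GRing.Theory Num.Theory.
Local Open Scope ring_scope.

(* The finite-dimensional algebra A is K^n (row vectors 'rV[K]_n, basis e_i =
   delta_mx 0 i) with multiplication given by structure constants
   c i j k = k-th coordinate of e_i e_j. *)
Section Defs.
Variables (K : fieldType) (n : nat).
Implicit Types (c : 'I_n -> 'I_n -> 'I_n -> K).

Definition amul c (u v : 'rV[K]_n) : 'rV[K]_n :=
  \row_k \sum_i \sum_j u 0 i * v 0 j * c i j k.

Definition associative_sc c : Prop :=
  forall u v w : 'rV[K]_n, amul c (amul c u v) w = amul c u (amul c v w).

Definition lbr c (u v : 'rV[K]_n) : 'rV[K]_n := amul c u v - amul c v u.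

Definition lie_subalgebra c (G : 'M[K]_n) : Prop :=
  forall u v : 'rV[K]_n, (u <= G)%MS -> (v <= G)%MS -> (lbr c u v <= G)%MS.

(* Tensors in A (x) A are n x n matrices: T i j = coefficient of e_i (x) e_j.
   a (x) b is the matrix a^T *m b. *)
Definition in_wedge (G : 'M[K]_n) (r : 'M[K]_n) : Prop :=
  (exists (m : nat) (al be : 'I_m -> 'rV[K]_n),
     (forall i, (al i <= G)%MS) /\ (forall i, (be i <= G)%MS) /\
     r = \sum_(i < m) (al i)^T *m (be i)) /\ r^T = - r.

Definition bc c (p q k : 'I_n) : K := c p q k - c q p k.

(* Classical Yang-Baxter equation, coordinate (a,b,c') of the 3-tensor
   [r12,r13] + [r12,r23] + [r13,r23]. *)
Definition cybe c (r : 'M[K]_n) : Prop :=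
  forall a b d : 'I_n,
    \sum_p \sum_q r p b * r q d * bc c p q a
  + \sum_p \sum_q r a p * r q d * bc c p q b
  + \sum_p \sum_q r a p * r b q * bc c p q d = 0.

(* componentwise product in A (x) A : (a (x) b)(a' (x) b') = aa' (x) bb' *)
Definition tmul c (X Y : 'M[K]_n) : 'M[K]_n :=
  \matrix_(i, j) \sum_a \sum_b \sum_a' \sum_b'
      X a b * Y a' b' * c a a' i * c b b' j.

Definition delta c (r X : 'M[K]_n) : 'M[K]_n := tmul c r X - tmul c X r.

Definition symm_tensor (X : 'M[K]_n) : Prop := X^T = X.

Definition symE (k l : 'I_n) : 'M[K]_n :=
  (2%:R)^-1 *: (delta_mx k l + delta_mx l k).

(* The bracket {x_i, x_j} of the coordinate functions defined by the dual
   delta^* : A^* /\ A^* -> Sym^2 A^* : the quadratic polynomial whose value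
   on the symmetric tensor x(x)x is < x_i /\ x_j , delta(x (x) x) >, i.e.
   sum_{k,l} delta(sym(e_k (x) e_l))_{ij} x_k x_l. Pairings: <xi /\ eta, Y> =
   sum xi_a eta_b Y_ab for Y in A /\ A; <q, X> = q(X) for X symmetric. *)
Definition pcoef c (r : 'M[K]_n) (i j : 'I_n) : {mpoly K[n]} :=
  \sum_k \sum_l (delta c r (symE k l) i j)%:MP * 'X_k * 'X_l.

End Defs.

Definition pbr (K : fieldType) (m : nat) (P : 'I_m -> 'I_m -> {mpoly K[m]})
  (f g : {mpoly K[m]}) : {mpoly K[m]} :=
  \sum_i \sum_j P i j * f^`M(i) * g^`M(j).

Definition is_poisson (K : fieldType) (m : nat)
  (P : 'I_m -> 'I_m -> {mpoly K[m]}) : Prop :=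
  (forall f g, pbr P f g = - pbr P g f) /\
  (forall f g h, pbr P f (pbr P g h) + pbr P g (pbr P h f)
                 + pbr P h (pbr P f g) = 0).

(* Product Poisson structure on A x A, coordinates 'I_(n + n):
   lshift = first factor, rshift = second factor. *)
Definition left_emb (K : fieldType) (n : nat) : n.-tuple {mpoly K[n + n]} :=
  [tuple 'X_(lshift n i) | i < n].
Definition right_emb (K : fieldType) (n : nat) : n.-tuple {mpoly K[n + n]} :=
  [tuple 'X_(rshift n i) | i < n].

Definition prodP (K : fieldType) (n : nat) (P : 'I_n -> 'I_n -> {mpoly K[n]})
  (a b : 'I_(n + n)) : {mpoly K[n + n]} :=
  match split a, split b with
  | inl i, inl j => P i j \mPo (left_emb K n)
  | inr i, inr j => P i j \mPo (right_emb K n)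
  | _, _ => 0
  end.

Definition mult_map (K : fieldType) (n : nat) (c : 'I_n -> 'I_n -> 'I_n -> K)
  : n.-tuple {mpoly K[n + n]} :=
  [tuple \sum_i \sum_j (c i j k)%:MP * 'X_(lshift n i) * 'X_(rshift n j)
     | k < n].

Definition mult_poisson (K : fieldType) (n : nat)
  (c : 'I_n -> 'I_n -> 'I_n -> K) (P : 'I_n -> 'I_n -> {mpoly K[n]}) : Prop :=
  forall f g : {mpoly K[n]},
    pbr (prodP P) (f \mPo mult_map c) (g \mPo mult_map c)
    = (pbr P f g) \mPo mult_map c.

(* Dualizing [delta(X) = r X - X r], the bracket of the coordinate functions
   is {x_i, x_j} = (r (x (x) x) - (x (x) x) r)_ij
              = sum_pq r_pq ((e_p x)_i (e_q x)_j - (x e_p)_i (x e_q)_j),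
   a quadratic bivector built from left and right multiplications; it is skew
   because r is. For the Jacobi identity it suffices to check the Schouten
   condition on coordinates. By associativity, differentiating (e_p x)_i along
   x |-> e_q x gives (e_p e_q x)_i, so the purely left terms (and the purely
   right ones, i.e. the left ones of the opposite algebra) assemble into the
   classical Yang-Baxter tensor, while the mixed terms cancel in pairs by
   skew-symmetry of r. For compatibility, the derivatives of (x, y) |-> xy
   along the two factors are right multiplication by y and left multiplication
   by x, and associativity turns the product bracket at (x, y) into the
   bracket at xy. *)

From HB Require Import structures.
From mathcomp Require Import all_boot all_order all_algebra.
From mathcomp Require Import mpoly.
From mathcomp Require Import ring.
Import Order.TTheory GRing.Theory Num.Theory.
Local Open Scope ring_scope.
Set Implicit Arguments. Unset Strict Implicit. Unset Printing Implicit Defensive.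

Section MpolyCalculus.
Variables (R : comNzRingType) (n k : nat).

Lemma mderivXU (i j : 'I_n) : ('X_i : {mpoly R[n]})^`M(j) = (i == j)%:R.
Proof.
rewrite mderivX mnm1E; case: eqP => [->|_]; last by rewrite scale0r.
suff -> : (U_(j) - U_(j) = 0)%MM by rewrite mpolyX0 scale1r.
by apply/mnmP => l; rewrite mnmBE subnn mnm0E.
Qed.

Lemma mderiv_comp (t : n.-tuple {mpoly R[k]}) (p : {mpoly R[n]}) (i : 'I_k) :
  (p \mPo t)^`M(i) = \sum_j (p^`M(j) \mPo t) * (tnth t j)^`M(i).
Proof.
pose chain q := forall i,
  (q \mPo t)^`M(i) = \sum_j (q^`M(j) \mPo t) * (tnth t j)^`M(i).
have chainD q1 q2 : chain q1 -> chain q2 -> chain (q1 + q2).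
  move=> h1 h2 l; rewrite rmorphD /= mderivD h1 h2 -big_split /=.
  by apply: eq_bigr => j _; rewrite mderivD rmorphD /= mulrDl.
have chainZ a q : chain q -> chain (a *: q).
  move=> h l; rewrite comp_mpolyZ mderivZ h scaler_sumr.
  by apply: eq_bigr => j _; rewrite mderivZ comp_mpolyZ scalerAl.
have chainM q1 q2 : chain q1 -> chain q2 -> chain (q1 * q2).
  move=> h1 h2 l; rewrite rmorphM /= mderivM h1 h2 mulr_suml mulr_sumr -big_split /=.
  by apply: eq_bigr => j _; rewrite mderivM rmorphD /= !rmorphM /=; ring.
have chain1 : chain 1.
  move=> l; rewrite -mpolyC1 comp_mpolyC mderivC big1 // => j _.
  by rewrite mderivC comp_mpolyC mul0r.
have chainX j : chain 'X_j.
  move=> l; rewrite comp_mpolyXU -tnth_nth (bigD1 j) //= big1 ?addr0.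
    by rewrite mderivXU eqxx comp_mpoly1 mul1r.
  by move=> j' ne; rewrite mderivXU eq_sym (negbTE ne) comp_mpoly0 mul0r.
move: i; elim/mpolyind: p => [|a m p _ _ IH].
  by move=> l; rewrite rmorph0 mderiv0 big1 // => j _; rewrite mderiv0 rmorph0 mul0r.
apply: chainD => //; apply: chainZ; rewrite mpolyXE_id.
apply: big_ind => // j _; elim: (m j) => [|e IHe]; first by rewrite expr0.
by rewrite exprS; apply: chainM.
Qed.

End MpolyCalculus.

Section BivectorPoisson.
Variables (K : fieldType) (m : nat) (P : 'I_m -> 'I_m -> {mpoly K[m]}).
Hypothesis P_skew : forall i j, P i j = - P j i.

Lemma pbr_skew f g : pbr P f g = - pbr P g f.
Proof.
rewrite /pbr exchange_big -sumrN; apply: eq_bigr => i _.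
by rewrite -sumrN; apply: eq_bigr => j _; rewrite P_skew; ring.
Qed.

(* The three kinds of terms in [pbr P f (pbr P g h)], according to where the
   outer derivative [d] falls: on [P], on [g], or on [h]. *)
Let jac_dP f g h := \sum_l \sum_d \sum_b \sum_c
  P l d * f^`M(l) * ((P b c)^`M(d) * g^`M(b) * h^`M(c)).
Let jac_ddl f g h := \sum_l \sum_d \sum_b \sum_c
  P l d * f^`M(l) * (P b c * g^`M(b)^`M(d) * h^`M(c)).
Let jac_ddr f g h := \sum_l \sum_d \sum_b \sum_c
  P l d * f^`M(l) * (P b c * g^`M(b) * h^`M(c)^`M(d)).

Lemma pbr_pbrE f g h : pbr P f (pbr P g h) = jac_dP f g h + jac_ddl f g h + jac_ddr f g h.
Proof.
rewrite /pbr -!big_split /=; apply: eq_bigr => l _.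
rewrite -!big_split /=; apply: eq_bigr => d _.
rewrite raddf_sum /= !mulr_sumr -!big_split /=; apply: eq_bigr => b _.
rewrite raddf_sum /= !mulr_sumr -!big_split /=; apply: eq_bigr => c _.
by rewrite !mderivM; ring.
Qed.

Lemma jac_dd_cancel f g h : jac_ddl f g h + jac_ddr h f g = 0.
Proof.
apply/eqP; rewrite addr_eq0; apply/eqP; rewrite /jac_ddl /jac_ddr -sumrN.
under eq_bigr => x _ do under eq_bigr => y _ do rewrite exchange_big.
under eq_bigr => x _ do rewrite exchange_big.
rewrite exchange_big.
under eq_bigr => x _ do under eq_bigr => y _ do rewrite exchange_big.
under eq_bigr => x _ do rewrite exchange_big.
apply: eq_bigr => l _; rewrite -sumrN; apply: eq_bigr => d _.
rewrite -sumrN; apply: eq_bigr => b _; rewrite -sumrN; apply: eq_bigr => c _.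
by rewrite (P_skew d l) mderiv_comm; ring.
Qed.

Lemma jac_dPE f g h : jac_dP f g h = \sum_l \sum_b \sum_c
  f^`M(l) * g^`M(b) * h^`M(c) * \sum_d P l d * (P b c)^`M(d).
Proof.
rewrite /jac_dP; under eq_bigr => x _ do rewrite exchange_big.
under eq_bigr => x _ do under eq_bigr => y _ do rewrite exchange_big.
apply: eq_bigr => l _; apply: eq_bigr => b _; apply: eq_bigr => c _.
by rewrite mulr_sumr; apply: eq_bigr => d _; ring.
Qed.

Hypothesis P_schouten : forall l b c, \sum_d (P l d * (P b c)^`M(d)
  + P b d * (P c l)^`M(d) + P c d * (P l b)^`M(d)) = 0.

Lemma jac_dP_cyclic f g h : jac_dP f g h + jac_dP g h f + jac_dP h f g = 0.
Proof.
rewrite !jac_dPE.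
rewrite [X in _ + X + _](eq_bigr _ (fun x _ => exchange_big _ _ _ _ _ _)) /=.
rewrite [X in _ + X + _]exchange_big [X in _ + X]exchange_big /=.
rewrite [X in _ + X](eq_bigr _ (fun x _ => exchange_big _ _ _ _ _ _)) /=.
rewrite -!big_split /= big1 // => l _; rewrite -!big_split /= big1 // => b _.
rewrite -!big_split /= big1 // => c _.
transitivity (f^`M(l) * g^`M(b) * h^`M(c) * \sum_d (P l d * (P b c)^`M(d)
  + P b d * (P c l)^`M(d) + P c d * (P l b)^`M(d))); last by rewrite P_schouten mulr0.
by rewrite !big_split /= !mulrDr; congr (_ + _ + _); ring.
Qed.

Lemma bivector_is_poisson : is_poisson P.
Proof.
split=> [|f g h]; first exact: pbr_skew.
rewrite !pbr_pbrE.
transitivity ((jac_dP f g h + jac_dP g h f + jac_dP h f g)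
  + (jac_ddl f g h + jac_ddr h f g) + (jac_ddl g h f + jac_ddr f g h)
  + (jac_ddl h f g + jac_ddr g h f)); first ring.
by rewrite jac_dP_cyclic !jac_dd_cancel !addr0.
Qed.

End BivectorPoisson.

Lemma pbr_comp (K : fieldType) (m k : nat) (P : 'I_m -> 'I_m -> {mpoly K[m]})
    (Q : 'I_k -> 'I_k -> {mpoly K[k]}) (t : m.-tuple {mpoly K[k]}) :
  (forall i j, \sum_a \sum_b Q a b * (tnth t i)^`M(a) * (tnth t j)^`M(b)
               = P i j \mPo t) ->
  forall f g, pbr Q (f \mPo t) (g \mPo t) = pbr P f g \mPo t.
Proof.
move=> PQ f g; rewrite /pbr.
under eq_bigr => a _ do under eq_bigr => b _ do rewrite !mderiv_comp.
rewrite rmorph_sum.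
under [RHS]eq_bigr => i _ do rewrite rmorph_sum.
under [RHS]eq_bigr => i _ do under eq_bigr => j _ do rewrite !rmorphM /= -PQ.
transitivity (\sum_a \sum_b \sum_i \sum_j Q a b * (tnth t i)^`M(a) * (tnth t j)^`M(b)
   * (f^`M(i) \mPo t) * (g^`M(j) \mPo t)).
  apply: eq_bigr => a _; apply: eq_bigr => b _.
  rewrite [RHS]exchange_big mulr_sumr; apply: eq_bigr => j _ /=.
  by rewrite mulr_sumr mulr_suml; apply: eq_bigr => i _ /=; ring.
under [LHS]eq_bigr => a _ do rewrite exchange_big /=.
rewrite exchange_big /=; apply: eq_bigr => i _.
under [LHS]eq_bigr => a _ do rewrite exchange_big /=.
rewrite exchange_big /=; apply: eq_bigr => j _.
rewrite !mulr_suml; apply: eq_bigr => a _; rewrite !mulr_suml; apply: eq_bigr => b _ /=.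
ring.
Qed.

Section StructureConstants.
Variables (K : fieldType) (n : nat).
Implicit Types (c : 'I_n -> 'I_n -> 'I_n -> K) (r : 'M[K]_n).

Definition sc_assoc c : Prop :=
  forall i j k t, \sum_s c i j s * c s k t = \sum_s c j k s * c i s t.

Definition sc_op c : 'I_n -> 'I_n -> 'I_n -> K := fun p k i => c k p i.

Lemma sc_op_assoc c : sc_assoc c -> sc_assoc (sc_op c).
Proof. by move=> assoc i j k t; rewrite /sc_op assoc; apply: eq_bigr => s _; ring. Qed.

Lemma cybe_op c r : cybe c r -> cybe (sc_op c) r.
Proof.
move=> cybe_cr a b d; have := cybe_cr a b d; rewrite /bc /sc_op => h.
rewrite -[RHS]oppr0 -{}[in RHS]h !opprD -!sumrN.
congr (_ + _ + _); apply: eq_bigr => p _; rewrite -sumrN; apply: eq_bigr => q _; ring.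
Qed.

Lemma sum_delta_row (i : 'I_n) (F : 'I_n -> K) :
  \sum_a (delta_mx 0 i : 'rV[K]_n) 0 a * F a = F i.
Proof.
rewrite (bigD1 i) //= big1 ?addr0; first by rewrite mxE !eqxx mul1r.
by move=> a na; rewrite mxE (negbTE na) andbF mul0r.
Qed.

Lemma amul_deltal c i v t :
  amul c (delta_mx 0 i) v 0 t = \sum_b v 0 b * c i b t.
Proof.
rewrite mxE -(sum_delta_row i (fun a => \sum_b v 0 b * c a b t)).
apply: eq_bigr => a _.
by rewrite mulr_sumr; apply: eq_bigr => b _; ring.
Qed.

Lemma amul_deltar c u k t :
  amul c u (delta_mx 0 k) 0 t = \sum_a u 0 a * c a k t.
Proof.
rewrite mxE; apply: eq_bigr => a _.
rewrite -(sum_delta_row k (fun b => u 0 a * c a b t)).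
by apply: eq_bigr => b _; ring.
Qed.

Lemma associative_scP c : associative_sc c -> sc_assoc c.
Proof.
move=> assoc i j k t.
have := congr1 (fun u : 'rV[K]_n => u 0 t)
  (assoc (delta_mx 0 i) (delta_mx 0 j) (delta_mx 0 k)).
rewrite /= amul_deltar amul_deltal => e.
transitivity (\sum_a amul c (delta_mx 0 i) (delta_mx 0 j) 0 a * c a k t).
  by apply: eq_bigr => a _; rewrite amul_deltar sum_delta_row.
by rewrite e; apply: eq_bigr => b _; rewrite amul_deltar sum_delta_row.
Qed.

(* [lmulX c p i] is the [i]-th coordinate of [e_p x]; with [sc_op c] it is that
   of [x e_p]. It is sealed, like [bimulX] below, so that rewriting with
   big-operator lemmas does not unfold it. *)
Fact lmulX_key : unit. Proof. by []. Qed.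
Definition lmulX c (p i : 'I_n) : {mpoly K[n]} :=
  locked_with lmulX_key (\sum_k (c p k i)%:MP * 'X_k).

Lemma lmulXE c p i : lmulX c p i = \sum_k (c p k i)%:MP * 'X_k.
Proof. by rewrite /lmulX unlock. Qed.

Lemma mderiv_lmulX c p i d : (lmulX c p i)^`M(d) = (c p d i)%:MP.
Proof.
rewrite lmulXE raddf_sum (bigD1 d) //= big1 ?addr0.
  by rewrite mderiv_mulC mderivXU eqxx mulr1.
by move=> k nk; rewrite mderiv_mulC mderivXU (negbTE nk) mulr0.
Qed.

Definition derv (v : 'I_n -> {mpoly K[n]}) (F : {mpoly K[n]}) : {mpoly K[n]} :=
  \sum_d v d * F^`M(d).

Lemma dervB v F G : derv v (F - G) = derv v F - derv v G.
Proof. by rewrite /derv -sumrB; apply: eq_bigr => d _; rewrite mderivB mulrBr. Qed.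

Lemma dervM v F G : derv v (F * G) = derv v F * G + F * derv v G.
Proof.
rewrite /derv mulr_suml mulr_sumr -big_split; apply: eq_bigr => d _.
by rewrite mderivM /=; ring.
Qed.

Lemma derv_mulC v a F : derv v (a%:MP * F) = a%:MP * derv v F.
Proof. by rewrite /derv mulr_sumr; apply: eq_bigr => d _; rewrite mderiv_mulC; ring. Qed.

Lemma derv_sum v (I : finType) (F : I -> {mpoly K[n]}) :
  derv v (\sum_i F i) = \sum_i derv v (F i).
Proof.
rewrite /derv exchange_big; apply: eq_bigr => d _.
by rewrite raddf_sum mulr_sumr.
Qed.

Lemma derv_lmulX c q p i : sc_assoc c ->
  derv (lmulX c q) (lmulX c p i) = \sum_s (c p q s)%:MP * lmulX c s i.
Proof.
move=> assoc; rewrite /derv; under eq_bigr => d _ do rewrite mderiv_lmulX lmulXE.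
under eq_bigr => d _ do rewrite mulr_suml.
under [RHS]eq_bigr => s _ do rewrite lmulXE mulr_sumr.
rewrite exchange_big [RHS]exchange_big; apply: eq_bigr => k _.
transitivity ((\sum_d c q k d * c p d i)%:MP * 'X_k).
  by rewrite rmorph_sum mulr_suml; apply: eq_bigr => d _; rewrite rmorphM; ring.
by rewrite -assoc rmorph_sum mulr_suml; apply: eq_bigr => s _; rewrite rmorphM; ring.
Qed.

(* [bimulX c q p i] is the [i]-th coordinate of [e_q x e_p]. *)
Fact bimulX_key : unit. Proof. by []. Qed.
Definition bimulX c (q p i : 'I_n) : {mpoly K[n]} :=
  locked_with bimulX_key (\sum_k \sum_d (c q k d * c d p i)%:MP * 'X_k).

Lemma bimulXE c q p i : bimulX c q p i = \sum_k \sum_d (c q k d * c d p i)%:MP * 'X_k.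
Proof. by rewrite /bimulX unlock. Qed.

Lemma derv_lmulX_op c q p i :
  derv (lmulX c q) (lmulX (sc_op c) p i) = bimulX c q p i.
Proof.
rewrite /derv bimulXE; under eq_bigr => d _ do rewrite mderiv_lmulX lmulXE mulr_suml.
rewrite exchange_big; apply: eq_bigr => k _; apply: eq_bigr => d _.
by rewrite /sc_op rmorphM; ring.
Qed.

Lemma derv_op_lmulX c q p i : sc_assoc c ->
  derv (lmulX (sc_op c) q) (lmulX c p i) = bimulX c p q i.
Proof.
move=> assoc; rewrite /derv bimulXE.
under eq_bigr => d _ do rewrite mderiv_lmulX lmulXE mulr_suml.
rewrite exchange_big; apply: eq_bigr => k _.
transitivity ((\sum_d c k q d * c p d i)%:MP * 'X_k).
  by rewrite rmorph_sum mulr_suml; apply: eq_bigr => d _; rewrite /sc_op rmorphM; ring.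
by rewrite -assoc rmorph_sum mulr_suml; apply: eq_bigr => d _; rewrite rmorphM; ring.
Qed.

End StructureConstants.

Section LmulTerm.
Variables (K : fieldType) (n : nat) (c : 'I_n -> 'I_n -> 'I_n -> K) (r : 'M[K]_n).
Hypothesis assoc : sc_assoc c.
Hypothesis r_skew : forall p q, r p q = - r q p.
Hypothesis cybe_cr : cybe c r.

Local Notation L := (lmulX c).

Let cubic (F : 'I_n -> 'I_n -> 'I_n -> K) l b e :=
  \sum_x \sum_y \sum_z (F x y z)%:MP * (L x l * L y b * L z e).

Let cubicD F G l b e :
  cubic (fun x y z => F x y z + G x y z) l b e = cubic F l b e + cubic G l b e.
Proof.
rewrite /cubic -big_split; apply: eq_bigr => x _; rewrite -big_split.
apply: eq_bigr => y _; rewrite -big_split; apply: eq_bigr => z _.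
by rewrite rmorphD /=; ring.
Qed.

Let cubic_rotl F l b e : cubic F b e l = cubic (fun x y z => F y z x) l b e.
Proof.
rewrite /cubic; under eq_bigr => x _ do rewrite exchange_big.
rewrite exchange_big; apply: eq_bigr => x _; apply: eq_bigr => y _.
by apply: eq_bigr => z _; ring.
Qed.

Let cubic_rotr F l b e : cubic F e l b = cubic (fun x y z => F z x y) l b e.
Proof.
rewrite /cubic exchange_big; under eq_bigr => x _ do rewrite exchange_big.
apply: eq_bigr => x _; apply: eq_bigr => y _.
by apply: eq_bigr => z _; ring.
Qed.

(* Half of the Yang-Baxter tensor: its cyclic symmetrization is the whole of it. *)
Let cybe_part x y z := \sum_q \sum_p' r x q * r p' z * c p' q y
  + \sum_q \sum_q' r x q * r y q' * c q' q z.

Let cybe_part_cyclic x y z : cybe_part x y z + cybe_part y z x + cybe_part z x y = 0.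
Proof.
have h := cybe_cr y x z; rewrite /bc in h.
rewrite -[RHS]h /cybe_part.
set U1 := \sum_q \sum_p' r x q * r p' z * c p' q y.
set U2 := \sum_q \sum_q' r x q * r y q' * c q' q z.
set V1 := \sum_q \sum_p' r y q * r p' x * c p' q z.
set V2 := \sum_q \sum_q' r y q * r z q' * c q' q x.
set W1 := \sum_q \sum_p' r z q * r p' y * c p' q x.
set W2 := \sum_q \sum_q' r z q * r x q' * c q' q y.
have -> : \sum_p \sum_q r p x * r q z * (c p q y - c q p y) = U1 + W2.
  rewrite /W2 /U1 [X in _ = _ + X]exchange_big -big_split; apply: eq_bigr => p _.
  rewrite -big_split; apply: eq_bigr => q _ /=.
  by rewrite (r_skew x p) (r_skew z q); ring.
have -> : \sum_p \sum_q r y p * r q z * (c p q x - c q p x) = W1 + V2.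
  rewrite /W1 /V2 [X in _ = X + _]exchange_big -big_split; apply: eq_bigr => p _.
  rewrite -big_split; apply: eq_bigr => q _ /=.
  by rewrite (r_skew z q) (r_skew p y); ring.
have -> : \sum_p \sum_q r y p * r x q * (c p q z - c q p z) = U2 + V1.
  rewrite /U2 /V1 [X in _ = X + _]exchange_big -big_split; apply: eq_bigr => p _.
  rewrite -big_split; apply: eq_bigr => q _ /=.
  by rewrite (r_skew q x); ring.
ring.
Qed.

Definition lmul_term l b e := \sum_p \sum_q \sum_p' \sum_q' (r p q * r p' q')%:MP *
  (L p l * (derv (L q) (L p' b) * L q' e + L p' b * derv (L q) (L q' e))).

Let lmul_term1 l b e := \sum_p \sum_q \sum_p' \sum_q' \sum_s
  (r p q * r p' q' * c p' q s)%:MP * (L p l * L s b * L q' e).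
Let lmul_term2 l b e := \sum_p \sum_q \sum_p' \sum_q' \sum_s
  (r p q * r p' q' * c q' q s)%:MP * (L p l * L p' b * L s e).

Let lmul_term_split l b e : lmul_term l b e = lmul_term1 l b e + lmul_term2 l b e.
Proof.
rewrite /lmul_term1 /lmul_term2 -big_split; apply: eq_bigr => p _.
rewrite -big_split; apply: eq_bigr => q _.
rewrite -big_split; apply: eq_bigr => p' _.
rewrite -big_split; apply: eq_bigr => q' _ /=.
rewrite !derv_lmulX //.
transitivity ((r p q * r p' q')%:MP * (L p l * ((\sum_s (c p' q s)%:MP * L s b) * L q' e)
  + L p l * (L p' b * \sum_s (c q' q s)%:MP * L s e))); first by ring.
rewrite mulrDr; congr (_ + _).
  by rewrite mulr_suml !mulr_sumr; apply: eq_bigr => s _; rewrite !rmorphM /=; ring.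
by rewrite !mulr_sumr; apply: eq_bigr => s _; rewrite !rmorphM /=; ring.
Qed.

Let lmul_term1E l b e :
  lmul_term1 l b e = cubic (fun x y z => \sum_q \sum_p' r x q * r p' z * c p' q y) l b e.
Proof.
symmetry; rewrite /cubic /lmul_term1; apply: eq_bigr => x _.
transitivity (\sum_y \sum_z \sum_q \sum_p'
   (r x q * r p' z * c p' q y)%:MP * (L x l * L y b * L z e)).
  apply: eq_bigr => y _; apply: eq_bigr => z _; rewrite rmorph_sum mulr_suml.
  by apply: eq_bigr => q _; rewrite rmorph_sum mulr_suml.
rewrite exchange_big /=.
under eq_bigr => z _ do rewrite exchange_big /=.
under eq_bigr => z _ do under eq_bigr => q _ do rewrite exchange_big /=.
rewrite exchange_big /=.
by under eq_bigr => q _ do rewrite exchange_big /=.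
Qed.

Let lmul_term2E l b e :
  lmul_term2 l b e = cubic (fun x y z => \sum_q \sum_q' r x q * r y q' * c q' q z) l b e.
Proof.
symmetry; rewrite /cubic /lmul_term2; apply: eq_bigr => x _.
transitivity (\sum_y \sum_z \sum_q \sum_q'
   (r x q * r y q' * c q' q z)%:MP * (L x l * L y b * L z e)).
  apply: eq_bigr => y _; apply: eq_bigr => z _; rewrite rmorph_sum mulr_suml.
  by apply: eq_bigr => q _; rewrite rmorph_sum mulr_suml.
under eq_bigr => y _ do rewrite exchange_big /=.
rewrite exchange_big /=.
by under eq_bigr => q _ do under eq_bigr => y _ do rewrite exchange_big /=.
Qed.

Lemma lmul_term_cyclic l b e : lmul_term l b e + lmul_term b e l + lmul_term e l b = 0.
Proof.
have lmul_termE l' b' e' : lmul_term l' b' e' = cubic cybe_part l' b' e'.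
  by rewrite lmul_term_split lmul_term1E lmul_term2E -cubicD.
rewrite !lmul_termE (cubic_rotl cybe_part) (cubic_rotr cybe_part) -!cubicD /cubic.
rewrite big1 // => x _; rewrite big1 // => y _; rewrite big1 // => z _.
by rewrite -addrA addrC -addrA addrA cybe_part_cyclic mpolyC0 mul0r.
Qed.

End LmulTerm.

Section RBivector.
Variables (K : fieldType) (n : nat) (c : 'I_n -> 'I_n -> 'I_n -> K) (r : 'M[K]_n).

Local Notation L := (lmulX c).
Local Notation R := (lmulX (sc_op c)).

(* The quadratic bivector [r (x (x) x) - (x (x) x) r]. *)
Definition rbivector (i j : 'I_n) : {mpoly K[n]} :=
  \sum_p \sum_q (r p q)%:MP * (L p i * L q j - R p i * R q j).

Hypothesis r_skew : forall p q, r p q = - r q p.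

Lemma rbivector_skew i j : rbivector i j = - rbivector j i.
Proof.
rewrite /rbivector exchange_big -sumrN; apply: eq_bigr => p _; rewrite -sumrN.
by apply: eq_bigr => q _; rewrite (r_skew q p) rmorphN /=; ring.
Qed.

Lemma rbivector_derv l F : \sum_d rbivector l d * F^`M(d) =
  \sum_p \sum_q (r p q)%:MP * (L p l * derv (L q) F - R p l * derv (R q) F).
Proof.
rewrite /rbivector /derv.
under eq_bigr => d _ do rewrite mulr_suml.
under eq_bigr => d _ do under eq_bigr => p _ do rewrite mulr_suml.
rewrite exchange_big; apply: eq_bigr => p _; rewrite exchange_big; apply: eq_bigr => q _.
by rewrite !mulr_sumr -sumrB mulr_sumr; apply: eq_bigr => d _; ring.
Qed.

Local Notation M := (bimulX c).

(* The terms of the Schouten bracket mixing left and right multiplications;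
   they cancel in pairs by skew-symmetry of [r]. *)
Let mix_LmR l b e := \sum_p \sum_q \sum_p' \sum_q' (r p q * r p' q')%:MP *
  (L p l * M q p' b * R q' e).
Let mix_LRm l b e := \sum_p \sum_q \sum_p' \sum_q' (r p q * r p' q')%:MP *
  (L p l * R p' b * M q q' e).
Let mix_RmL l b e := \sum_p \sum_q \sum_p' \sum_q' (r p q * r p' q')%:MP *
  (R p l * M p' q b * L q' e).
Let mix_RLm l b e := \sum_p \sum_q \sum_p' \sum_q' (r p q * r p' q')%:MP *
  (R p l * L p' b * M q' q e).

Let mix_LmR_RLm l b e : mix_LmR l b e + mix_RLm e l b = 0.
Proof.
apply/eqP; rewrite addr_eq0; apply/eqP; rewrite /mix_LmR /mix_RLm -sumrN.
under eq_bigr => x _ do under eq_bigr => y _ do rewrite exchange_big.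
under eq_bigr => x _ do rewrite exchange_big.
rewrite exchange_big.
under eq_bigr => x _ do under eq_bigr => y _ do rewrite exchange_big.
under eq_bigr => x _ do rewrite exchange_big.
apply: eq_bigr => p _; rewrite -sumrN; apply: eq_bigr => q _.
rewrite -sumrN; apply: eq_bigr => p' _; rewrite -sumrN; apply: eq_bigr => q' _.
by rewrite (r_skew q p) !rmorphM rmorphN /=; ring.
Qed.

Let mix_LRm_RmL l b e : mix_LRm l b e + mix_RmL b e l = 0.
Proof.
apply/eqP; rewrite addr_eq0; apply/eqP; rewrite /mix_LRm /mix_RmL -sumrN.
under eq_bigr => x _ do rewrite exchange_big.
rewrite exchange_big.
under eq_bigr => x _ do under eq_bigr => y _ do rewrite exchange_big.
under eq_bigr => x _ do rewrite exchange_big.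
under eq_bigr => x _ do under eq_bigr => y _ do rewrite exchange_big.
apply: eq_bigr => p _; rewrite -sumrN; apply: eq_bigr => q _.
rewrite -sumrN; apply: eq_bigr => p' _; rewrite -sumrN; apply: eq_bigr => q' _.
by rewrite (r_skew q' p') !rmorphM rmorphN /=; ring.
Qed.

Hypothesis assoc : sc_assoc c.

Let rbivector_dervE l b e : \sum_d rbivector l d * (rbivector b e)^`M(d)
  = lmul_term c r l b e + lmul_term (sc_op c) r l b e
    - (mix_LmR l b e + mix_LRm l b e + mix_RmL l b e + mix_RLm l b e).
Proof.
rewrite rbivector_derv /lmul_term /mix_LmR /mix_LRm /mix_RmL /mix_RLm.
rewrite -!big_split -sumrB; apply: eq_bigr => p _.
rewrite -!big_split -sumrB; apply: eq_bigr => q _ /=.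
rewrite /rbivector !derv_sum !mulr_sumr -sumrB !mulr_sumr -!big_split -sumrB /=.
apply: eq_bigr => p' _.
rewrite !derv_sum !mulr_sumr -sumrB !mulr_sumr -!big_split -sumrB /=.
apply: eq_bigr => q' _.
rewrite !derv_mulC !dervB !dervM !(derv_op_lmulX _ _ _ assoc) !(derv_lmulX_op c) rmorphM /=.
ring.
Qed.

Hypothesis cybe_cr : cybe c r.

Lemma rbivector_schouten l b e : \sum_d (rbivector l d * (rbivector b e)^`M(d)
  + rbivector b d * (rbivector e l)^`M(d) + rbivector e d * (rbivector l b)^`M(d)) = 0.
Proof.
rewrite !big_split /= !rbivector_dervE.
have hL := lmul_term_cyclic assoc r_skew cybe_cr l b e.
have hR := lmul_term_cyclic (sc_op_assoc assoc) r_skew (cybe_op cybe_cr) l b e.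
transitivity ((lmul_term c r l b e + lmul_term c r b e l + lmul_term c r e l b)
  + (lmul_term (sc_op c) r l b e + lmul_term (sc_op c) r b e l
     + lmul_term (sc_op c) r e l b)
  - ((mix_LmR l b e + mix_RLm e l b) + (mix_LmR b e l + mix_RLm l b e)
     + (mix_LmR e l b + mix_RLm b e l) + (mix_LRm l b e + mix_RmL b e l)
     + (mix_LRm b e l + mix_RmL e l b) + (mix_LRm e l b + mix_RmL l b e))).
  by ring.
by rewrite hL hR !mix_LmR_RLm !mix_LRm_RmL !addr0 subr0.
Qed.

Lemma rbivector_is_poisson : is_poisson rbivector.
Proof. exact: (bivector_is_poisson rbivector_skew rbivector_schouten). Qed.

End RBivector.

Section DeltaCoboundary.
Variables (K : fieldType) (n : nat) (c : 'I_n -> 'I_n -> 'I_n -> K) (r : 'M[K]_n).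

Lemma trmx_tmul (A B : 'M[K]_n) : (tmul c A B)^T = tmul c A^T B^T.
Proof.
apply/matrixP => i j; rewrite !mxE exchange_big; apply: eq_bigr => a _.
apply: eq_bigr => b _; rewrite exchange_big; apply: eq_bigr => a' _.
by apply: eq_bigr => b' _; rewrite !mxE; ring.
Qed.

Lemma tmulNl (A B : 'M[K]_n) : tmul c (- A) B = - tmul c A B.
Proof.
apply/matrixP => i j; rewrite !mxE -!sumrN; apply: eq_bigr => a _.
rewrite -sumrN; apply: eq_bigr => b _; rewrite -sumrN; apply: eq_bigr => a' _.
by rewrite -sumrN; apply: eq_bigr => b' _; rewrite !mxE; ring.
Qed.

Lemma tmulNr (A B : 'M[K]_n) : tmul c A (- B) = - tmul c A B.
Proof.
apply/matrixP => i j; rewrite !mxE -!sumrN; apply: eq_bigr => a _.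
rewrite -sumrN; apply: eq_bigr => b _; rewrite -sumrN; apply: eq_bigr => a' _.
by rewrite -sumrN; apply: eq_bigr => b' _; rewrite !mxE; ring.
Qed.

Lemma delta_skew (X : 'M[K]_n) : r^T = - r -> symm_tensor X ->
  (delta c r X)^T = - delta c r X.
Proof.
move=> r_skew X_symm; rewrite /delta linearB /= !trmx_tmul r_skew X_symm.
by rewrite tmulNl tmulNr opprB opprK addrC.
Qed.

Lemma sum_delta_mx (k l : 'I_n) (F : 'I_n -> 'I_n -> K) :
  \sum_a \sum_b (delta_mx k l : 'M[K]_n) a b * F a b = F k l.
Proof.
rewrite (bigD1 k) //= [X in _ + X]big1 ?addr0.
  rewrite (bigD1 l) //= big1 ?addr0; first by rewrite mxE !eqxx mul1r.
  by move=> b nb; rewrite mxE eqxx (negbTE nb) mul0r.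
by move=> a na; rewrite big1 // => b _; rewrite mxE (negbTE na) mul0r.
Qed.

Lemma sum_symE (k l : 'I_n) (F : 'I_n -> 'I_n -> K) :
  \sum_a \sum_b @symE K n k l a b * F a b = 2%:R^-1 * (F k l + F l k).
Proof.
rewrite -!sum_delta_mx mulrDr !mulr_sumr -big_split; apply: eq_bigr => a _.
by rewrite !mulr_sumr -big_split; apply: eq_bigr => b _; rewrite !mxE /=; ring.
Qed.

Lemma delta_symE i j k l : delta c r (@symE K n k l) i j =
  2%:R^-1 * (\sum_a \sum_b r a b * (c a k i * c b l j - c k a i * c l b j)
           + \sum_a \sum_b r a b * (c a l i * c b k j - c l a i * c k b j)).
Proof.
have tmul_r_symE : tmul c r (@symE K n k l) i j = \sum_a \sum_b
    2%:R^-1 * (r a b * c a k i * c b l j + r a b * c a l i * c b k j).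
  rewrite mxE; apply: eq_bigr => a _; apply: eq_bigr => b _.
  rewrite -(sum_symE k l (fun a' b' => r a b * c a a' i * c b b' j)).
  by apply: eq_bigr => a' _; apply: eq_bigr => b' _; ring.
have tmul_symE_r : tmul c (@symE K n k l) r i j = \sum_a \sum_b
    2%:R^-1 * (r a b * c k a i * c l b j + r a b * c l a i * c k b j).
  rewrite mxE.
  transitivity (\sum_a' \sum_b' @symE K n k l a' b' *
      \sum_a \sum_b r a b * c a' a i * c b' b j).
    apply: eq_bigr => a' _; apply: eq_bigr => b' _; rewrite mulr_sumr.
    by apply: eq_bigr => a _; rewrite mulr_sumr; apply: eq_bigr => b _; ring.
  rewrite sum_symE -big_split mulr_sumr; apply: eq_bigr => a _.
  by rewrite -big_split mulr_sumr /=; apply: eq_bigr => b _; ring.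
transitivity (tmul c r (@symE K n k l) i j - tmul c (@symE K n k l) r i j).
  by rewrite /delta !mxE.
rewrite tmul_r_symE tmul_symE_r -sumrB -big_split mulr_sumr.
apply: eq_bigr => a _; rewrite -sumrB -big_split mulr_sumr.
by apply: eq_bigr => b _ /=; ring.
Qed.

Lemma quad_symmetrize (G : 'I_n -> 'I_n -> K) : (2%:R : K) != 0 ->
  \sum_k \sum_l (2%:R^-1 * (G k l + G l k))%:MP * 'X_k * 'X_l
  = \sum_k \sum_l (G k l)%:MP * 'X_k * 'X_l :> {mpoly K[n]}.
Proof.
move=> two_neq0.
transitivity (\sum_k \sum_l ((2%:R^-1 * G k l)%:MP * 'X_k * 'X_l
   + (2%:R^-1 * G l k)%:MP * 'X_k * 'X_l) : {mpoly K[n]}).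
  by apply: eq_bigr => k _; apply: eq_bigr => l _; rewrite mulrDr rmorphD /=; ring.
rewrite (eq_bigr _ (fun k _ => big_split _ _ _ _ _)) big_split /=.
rewrite [X in _ + X]exchange_big /= -big_split; apply: eq_bigr => k _.
rewrite -big_split; apply: eq_bigr => l _ /=.
have halves : (2%:R^-1 + 2%:R^-1 : K) = 1 by field.
by rewrite -[in RHS](mul1r (G k l)) -[in RHS]halves mulrDl rmorphD /=; ring.
Qed.

Lemma pcoefE i j : (2%:R : K) != 0 -> pcoef c r i j = rbivector c r i j.
Proof.
move=> two_neq0; rewrite /pcoef.
under eq_bigr => k _ do under eq_bigr => l _ do rewrite delta_symE.
rewrite (quad_symmetrize (fun k l => \sum_a \sum_b
  r a b * (c a k i * c b l j - c k a i * c l b j))) //.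
transitivity (\sum_k \sum_l \sum_p \sum_q ((r p q)%:MP *
  ((c p k i * c q l j)%:MP * 'X_k * 'X_l - (c k p i * c l q j)%:MP * 'X_k * 'X_l))
  : {mpoly K[n]}).
  apply: eq_bigr => k _; apply: eq_bigr => l _; rewrite !rmorph_sum /= !mulr_suml.
  apply: eq_bigr => p _; rewrite rmorph_sum /= !mulr_suml.
  by apply: eq_bigr => q _; rewrite !rmorphM /= !rmorphB /= !rmorphM /=; ring.
under eq_bigr => k _ do rewrite exchange_big /=.
rewrite exchange_big /=; apply: eq_bigr => p _.
under eq_bigr => k _ do rewrite exchange_big /=.
rewrite exchange_big /=; apply: eq_bigr => q _.
rewrite !lmulXE /sc_op !big_distrl /= -sumrB mulr_sumr; apply: eq_bigr => k _.
rewrite !big_distrr /= -sumrB mulr_sumr; apply: eq_bigr => l _.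
by rewrite !rmorphM /=; ring.
Qed.

End DeltaCoboundary.

Lemma eq_pbr (K : fieldType) (m : nat) (P Q : 'I_m -> 'I_m -> {mpoly K[m]}) :
  P =2 Q -> forall f g, pbr P f g = pbr Q f g.
Proof. by move=> PQ f g; apply: eq_bigr => i _; apply: eq_bigr => j _; rewrite PQ. Qed.

Lemma eq_is_poisson (K : fieldType) (m : nat) (P Q : 'I_m -> 'I_m -> {mpoly K[m]}) :
  P =2 Q -> is_poisson Q -> is_poisson P.
Proof. by move=> PQ [skew jac]; split=> *; rewrite !(eq_pbr PQ). Qed.

Lemma eq_mult_poisson (K : fieldType) (n : nat) (c : 'I_n -> 'I_n -> 'I_n -> K)
    (P Q : 'I_n -> 'I_n -> {mpoly K[n]}) :
  P =2 Q -> mult_poisson c Q -> mult_poisson c P.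
Proof.
move=> PQ mulQ f g; have PQ2 : prodP P =2 prodP Q.
  by move=> a b; rewrite /prodP; case: split => i; case: split => j; rewrite ?PQ.
by rewrite !(eq_pbr PQ2) !(eq_pbr PQ) mulQ.
Qed.

Section MultiplicationPoisson.
Variables (K : fieldType) (n : nat) (c : 'I_n -> 'I_n -> 'I_n -> K).

Local Notation xL i := ('X_(lshift n i) : {mpoly K[n + n]}).
Local Notation xR i := ('X_(rshift n i) : {mpoly K[n + n]}).

Lemma split_lshift (i : 'I_n) : split (lshift n i) = inl i.
Proof. exact: (unsplitK (inl _ i)). Qed.

Lemma split_rshift (i : 'I_n) : split (rshift n i) = inr i.
Proof. exact: (unsplitK (inr _ i)). Qed.

Lemma tnth_mult_map k :
  tnth (mult_map c) k = \sum_i \sum_j (c i j k)%:MP * xL i * xR j.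
Proof. by rewrite tnth_map tnth_ord_tuple. Qed.

Lemma mderiv_mult_mapL d k :
  (tnth (mult_map c) k)^`M(lshift n d) = \sum_j (c d j k)%:MP * xR j.
Proof.
rewrite tnth_mult_map raddf_sum (bigD1 d) //= [X in _ + X]big1 ?addr0.
  rewrite raddf_sum; apply: eq_bigr => j _.
  by rewrite /= mderivM mderiv_mulC !mderivXU eqxx eq_rlshift /=; ring.
move=> i ni; rewrite raddf_sum big1 // => j _.
by rewrite /= mderivM mderiv_mulC !mderivXU eq_lshift (negbTE ni) eq_rlshift /=; ring.
Qed.

Lemma mderiv_mult_mapR d k :
  (tnth (mult_map c) k)^`M(rshift n d) = \sum_i (c i d k)%:MP * xL i.
Proof.
rewrite tnth_mult_map raddf_sum; apply: eq_bigr => i _.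
rewrite raddf_sum (bigD1 d) //= [X in _ + X]big1 ?addr0.
  by rewrite /= mderivM mderiv_mulC !mderivXU eqxx eq_lrshift /=; ring.
move=> j nj.
by rewrite /= mderivM mderiv_mulC !mderivXU eq_rshift (negbTE nj) eq_lrshift /=; ring.
Qed.

(* The product Poisson structure only pairs derivatives along the same factor. *)
Lemma prodP_mult_map (P : 'I_n -> 'I_n -> {mpoly K[n]}) k l :
  \sum_a \sum_b prodP P a b * (tnth (mult_map c) k)^`M(a) * (tnth (mult_map c) l)^`M(b)
  = \sum_i \sum_j (P i j \mPo left_emb K n) * (\sum_t (c i t k)%:MP * xR t)
        * (\sum_t (c j t l)%:MP * xR t)
  + \sum_i \sum_j (P i j \mPo right_emb K n) * (\sum_t (c t i k)%:MP * xL t)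
        * (\sum_t (c t j l)%:MP * xL t).
Proof.
rewrite big_split_ord /=; congr (_ + _).
  apply: eq_bigr => i _; rewrite big_split_ord /= [X in _ + X]big1 ?addr0.
    by apply: eq_bigr => j _; rewrite /prodP !split_lshift !mderiv_mult_mapL.
  by move=> j _; rewrite /prodP split_lshift split_rshift !mul0r.
apply: eq_bigr => i _; rewrite big_split_ord /= big1 ?add0r.
  by apply: eq_bigr => j _; rewrite /prodP !split_rshift !mderiv_mult_mapR.
by move=> j _; rewrite /prodP split_lshift split_rshift !mul0r.
Qed.

Definition bilinX (M : 'I_n -> 'I_n -> K) : {mpoly K[n + n]} :=
  \sum_s \sum_j (M s j)%:MP * xL s * xR j.

Lemma eq_bilinX M1 M2 : M1 =2 M2 -> bilinX M1 = bilinX M2.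
Proof. by move=> h; apply: eq_bigr => s _; apply: eq_bigr => j _; rewrite h. Qed.

Lemma bilinX_tr (M : 'I_n -> 'I_n -> K) :
  \sum_s \sum_t (M s t)%:MP * xR s * xL t = bilinX (fun t s => M s t).
Proof. by rewrite exchange_big; apply: eq_bigr => t _; apply: eq_bigr => s _; ring. Qed.

Lemma sum_mul_linX (a b : 'I_n -> 'I_n -> K) (X1 X2 : 'I_n -> {mpoly K[n + n]}) :
  \sum_i (\sum_s (a i s)%:MP * X1 s) * (\sum_j (b i j)%:MP * X2 j)
  = \sum_s \sum_j (\sum_i a i s * b i j)%:MP * X1 s * X2 j.
Proof.
transitivity (\sum_i \sum_s \sum_j (a i s * b i j)%:MP * X1 s * X2 j).
  apply: eq_bigr => i _; rewrite mulr_suml; apply: eq_bigr => s _.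
  by rewrite mulr_sumr; apply: eq_bigr => j _; rewrite rmorphM /=; ring.
rewrite exchange_big /=; apply: eq_bigr => s _; rewrite exchange_big /=.
by apply: eq_bigr => j _; rewrite rmorph_sum /= !mulr_suml; apply: eq_bigr => i _; ring.
Qed.

Lemma lmulX_left_mul c' p k :
  \sum_i (lmulX c' p i \mPo left_emb K n) * \sum_t (c i t k)%:MP * xR t
  = bilinX (fun s t => \sum_i c' p s i * c i t k).
Proof.
under eq_bigr => i _ do rewrite lmulXE rmorph_sum.
under eq_bigr => i _ do under eq_bigr => s _ do
  rewrite rmorphM /= comp_mpolyC comp_mpolyXU -tnth_nth tnth_map tnth_ord_tuple.
exact: sum_mul_linX.
Qed.

Lemma lmulX_right_mul c' p k :
  \sum_i (lmulX c' p i \mPo right_emb K n) * \sum_t (c t i k)%:MP * xL t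
  = bilinX (fun t s => \sum_i c' p s i * c t i k).
Proof.
under eq_bigr => i _ do rewrite lmulXE rmorph_sum.
under eq_bigr => i _ do under eq_bigr => s _ do
  rewrite rmorphM /= comp_mpolyC comp_mpolyXU -tnth_nth tnth_map tnth_ord_tuple.
by rewrite sum_mul_linX bilinX_tr.
Qed.

Lemma lmulX_mult_map c' p k :
  lmulX c' p k \mPo mult_map c = bilinX (fun s j => \sum_t c s j t * c' p t k).
Proof.
rewrite lmulXE rmorph_sum.
transitivity (\sum_t \sum_s \sum_j (c s j t * c' p t k)%:MP * xL s * xR j).
  apply: eq_bigr => t _; rewrite rmorphM /= comp_mpolyC comp_mpolyXU -tnth_nth.
  rewrite tnth_mult_map mulr_sumr; apply: eq_bigr => s _.
  by rewrite mulr_sumr; apply: eq_bigr => j _; rewrite rmorphM /=; ring.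
rewrite exchange_big /=; apply: eq_bigr => s _; rewrite exchange_big /=.
by apply: eq_bigr => j _; rewrite rmorph_sum !mulr_suml.
Qed.

Variable r : 'M[K]_n.

Lemma rbivector_comp k (t : n.-tuple {mpoly K[k]}) i j : rbivector c r i j \mPo t =
  \sum_p \sum_q (r p q)%:MP * ((lmulX c p i \mPo t) * (lmulX c q j \mPo t)
     - (lmulX (sc_op c) p i \mPo t) * (lmulX (sc_op c) q j \mPo t)).
Proof.
rewrite rmorph_sum; apply: eq_bigr => p _; rewrite rmorph_sum; apply: eq_bigr => q _.
by rewrite rmorphM rmorphB /= !rmorphM /= comp_mpolyC.
Qed.

Lemma sum_rquad_mul (u v : 'I_n -> 'I_n -> {mpoly K[n + n]}) (w z : 'I_n -> {mpoly K[n + n]}) :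
  \sum_i \sum_j (\sum_p \sum_q (r p q)%:MP * (u p i * u q j - v p i * v q j)) * w i * z j
  = \sum_p \sum_q (r p q)%:MP * ((\sum_i u p i * w i) * (\sum_j u q j * z j)
      - (\sum_i v p i * w i) * (\sum_j v q j * z j)).
Proof.
transitivity (\sum_i \sum_j \sum_p \sum_q
    (r p q)%:MP * (u p i * u q j - v p i * v q j) * w i * z j).
  apply: eq_bigr => i _; apply: eq_bigr => j _; rewrite !mulr_suml.
  by apply: eq_bigr => p _; rewrite !mulr_suml.
under eq_bigr => i _ do rewrite exchange_big /=.
rewrite exchange_big /=; apply: eq_bigr => p _.
under eq_bigr => i _ do rewrite exchange_big /=.
rewrite exchange_big /=; apply: eq_bigr => q _.
rewrite !mulr_suml -sumrB mulr_sumr; apply: eq_bigr => i _.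
by rewrite !mulr_sumr -sumrB mulr_sumr; apply: eq_bigr => j _; ring.
Qed.

Hypothesis assoc : sc_assoc c.

(* Associativity identifies the left (resp. right) multiplications on each
   factor of [A x A] with those on the product. *)
Lemma rbivector_mult_map k l :
  \sum_a \sum_b prodP (rbivector c r) a b * (tnth (mult_map c) k)^`M(a)
     * (tnth (mult_map c) l)^`M(b) = rbivector c r k l \mPo mult_map c.
Proof.
rewrite prodP_mult_map rbivector_comp.
under eq_bigr => i _ do under eq_bigr => j _ do rewrite rbivector_comp.
under [X in _ + X]eq_bigr => i _ do under eq_bigr => j _ do rewrite rbivector_comp.
rewrite !sum_rquad_mul -big_split /=; apply: eq_bigr => p _; rewrite -big_split /=.
apply: eq_bigr => q _.
rewrite !lmulX_left_mul !lmulX_right_mul !lmulX_mult_map.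
have LL p' k' : bilinX (fun s t => \sum_i c p' s i * c i t k') =
    bilinX (fun s j => \sum_t c s j t * c p' t k').
  by apply: eq_bilinX => s t; rewrite assoc.
have RL p' k' : bilinX (fun s t => \sum_i sc_op c p' s i * c i t k') =
    bilinX (fun t s => \sum_i c p' s i * c t i k').
  by apply: eq_bilinX => s t; rewrite /sc_op assoc.
have RR p' k' : bilinX (fun t s => \sum_i sc_op c p' s i * c t i k') =
    bilinX (fun s j => \sum_t c s j t * sc_op c p' t k').
  by apply: eq_bilinX => s t; rewrite /sc_op assoc.
by rewrite !LL !RL !RR; ring.
Qed.

Lemma rbivector_mult_poisson : mult_poisson c (rbivector c r).
Proof. exact/pbr_comp/rbivector_mult_map. Qed.

End MultiplicationPoisson.

Theorem corollary7 (K : numFieldType) (n : nat)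
  (c : 'I_n -> 'I_n -> 'I_n -> K) (G : 'M[K]_n) (r : 'M[K]_n) :
  associative_sc c ->
  lie_subalgebra c G ->
  in_wedge G r ->
  cybe c r ->
  (forall X : 'M[K]_n, symm_tensor X -> (delta c r X)^T = - delta c r X) /\
  is_poisson (pcoef c r) /\
  mult_poisson c (pcoef c r).
Proof.
move=> assoc_A _ [_ r_tr] cybe_cr.
have assoc := associative_scP assoc_A.
have r_skew p q : r p q = - r q p.
  by have := congr1 (fun M : 'M[K]_n => M q p) r_tr; rewrite !mxE.
have pcoef_rbivector : pcoef c r =2 rbivector c r.
  by move=> i j; apply: pcoefE; rewrite pnatr_eq0.
split; first by move=> X; apply: delta_skew.
split; first exact: eq_is_poisson pcoef_rbivector (rbivector_is_poisson r_skew assoc cybe_cr).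
exact: eq_mult_poisson pcoef_rbivector (rbivector_mult_poisson r assoc).
Qed.
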